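(* Let $k>t+1$, $n>2k-t$, and let $\mathcal{S}_a$ be a maximal set of $k$-spaces in $\mathrm{AG}(n,q)$ pairwise intersecting in at least a $t$-space. Let $\psi(\mathcal{S}_a)=\min\{\dim T: T\text{ an affine subspace},\ \dim(T\cap\alpha)\geq t\ \forall\alpha\in\mathcal{S}_a\}$. If $\psi(\mathcal{S}_a)=t+x$ with $x\geq 2$, then \[|\mathcal{S}_a|\leq q^x\left[{t+x\atop x}\right]_q(\theta_{k-t})^x\left[{n-t-x\atop k-t-x}\right]_q.\]
   Context: Affine subspaces intersect in at least a $t$-space if their affine intersection has dimension at least $t$. $\left[{n\atop k}\right]_q=\frac{(q^n-1)\cdots(q^{n-k+1}-1)}{(q^k-1)\cdots(q-1)}$ for $k>0$, $=1$ for $k=0$; $\theta_m=\frac{q^{m+1}-1}{q-1}$. Maximal means no further affine $k$-space can be added keeping the property. *)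

(* AG(n,q) is modelled as the row space 'rV[F]_n over a
   finite field F with q = #|F| elements. *)
From HB Require Import structures.
From mathcomp Require Import all_boot all_order all_algebra.
Set Implicit Arguments. Unset Strict Implicit. Unset Printing Implicit Defensive.
Import Order.TTheory GRing.Theory Num.Theory.

Local Open Scope ring_scope.

Definition affine_space (F : finFieldType) (n k : nat) (A : {set 'rV[F]_n}) : Prop :=
  exists (v : 'rV[F]_n) (W : {vspace 'rV[F]_n}),
    \dim W = k /\ A = [set x | x - v \in W].

Definition meets_in (F : finFieldType) (n t : nat) (A B : {set 'rV[F]_n}) : Prop :=
  exists C : {set 'rV[F]_n}, affine_space t C /\ C \subset A /\ C \subset B.

Definition t_intersecting (F : finFieldType) (n k t : nat)
  (S : {set {set 'rV[F]_n}}) : Prop :=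
  (forall A, A \in S -> affine_space k A) /\
  (forall A B, A \in S -> B \in S -> A != B -> meets_in t A B).

Definition maximal_t_intersecting (F : finFieldType) (n k t : nat)
  (S : {set {set 'rV[F]_n}}) : Prop :=
  t_intersecting k t S /\
  (forall B, affine_space k B -> B \notin S -> exists2 A, A \in S & ~ meets_in t A B).

Definition covers (F : finFieldType) (n t : nat) (T : {set 'rV[F]_n})
  (S : {set {set 'rV[F]_n}}) : Prop :=
  forall A, A \in S -> meets_in t T A.

Definition qbinom (q n k : nat) : rat :=
  \prod_(i < k) (((q ^ (n - i))%:R - 1) / ((q ^ i.+1)%:R - 1)).

Definition theta (q m : nat) : rat := ((q ^ m.+1)%:R - 1) / (q%:R - 1).

From HB Require Import structures.
From mathcomp Require Import all_boot all_order all_algebra finfield.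
From mathcomp Require Import ring lra zify.
From Stdlib Require Import Classical.
Import Order.TTheory GRing.Theory Num.Theory.
Local Open Scope ring_scope.

Set Implicit Arguments. Unset Strict Implicit. Unset Printing Implicit Defensive.

(* Work in the projective closure of AG(n,q): the point a is the vector (1,a) of
   F^(1+n), an affine s-space A spans the (s+1)-space [cone A], which is not
   contained in the hyperplane at infinity [Hinf], and A is the affine part of
   [cone A].
   Let U be a subspace not contained in [Hinf], of dimension s+1 > t, and count the
   members of S whose cone contains U. If s >= t+x, count all (k+1)-spaces through
   U. If s < t+x, the affine part of U is too small to meet every member of S in a
   t-space, so some A in S does not; then W = U :&: cone A has dimension at most t
   or lies in [Hinf]. Any other B through U meets A in a t-space, so [cone B]
   contains U + C for a subspace C of [cone A] containing W, of dimension
   max(t, dim W) + 1. There are at most theta_(k-t)^g such C, where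
   g = dim C - dim W, and each raises the dimension of U by g; induction then gives
   the bound theta_(k-t)^(t+x-s) [n-t-x, k-t-x] (this step uses n > 2k - t).
   Finally, every member of S meets the covering (t+x)-space T in a t-space, so S
   is covered by the (t+1)-subspaces of [cone T] not in [Hinf], of which there are
   q^x [t+x, x]. *)

Section GaussianBinomial.
Variable q : nat.
Hypothesis q_gt1 : (1 < q)%N.

Lemma expq_ge1 i : 1 <= (q ^ i)%:R :> rat.
Proof. by rewrite ler1n expn_gt0 (ltn_trans _ q_gt1). Qed.

Lemma expqS_sub1_gt0 i : 0 < (q ^ i.+1)%:R - 1 :> rat.
Proof. by rewrite subr_gt0 ltr1n -(expn0 q) ltn_exp2l. Qed.

Lemma qbinom_ge0 m j : 0 <= qbinom q m j.
Proof. by apply: prodr_ge0 => i _; apply: divr_ge0; rewrite subr_ge0 expq_ge1. Qed.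

Lemma theta_ge0 c : 0 <= theta q c.
Proof.
apply: divr_ge0; rewrite subr_ge0 ?expq_ge1 //.
by have := expq_ge1 1; rewrite expn1.
Qed.

Lemma qbinom0 m : qbinom q m 0 = 1.
Proof. by rewrite /qbinom big_ord0. Qed.

Lemma qbinomSr m j : qbinom q m j.+1 =
  qbinom q m j * (((q ^ (m - j))%:R - 1) / ((q ^ j.+1)%:R - 1)).
Proof. by rewrite /qbinom big_ord_recr. Qed.

Lemma qbinomSS m j : qbinom q m.+1 j.+1 =
  ((q ^ m.+1)%:R - 1) / ((q ^ j.+1)%:R - 1) * qbinom q m j.
Proof.
rewrite /qbinom !prodf_div big_ord_recl big_ord_recr /= subn0.
by rewrite mulf_div [X in _ / X]mulrC.
Qed.

Lemma qbinom_id m : qbinom q m m = 1.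
Proof.
elim: m => [|m IH]; first exact: qbinom0.
by rewrite qbinomSS IH mulr1 divff // gt_eqF // expqS_sub1_gt0.
Qed.

Lemma qbinomSl m i : (i <= m)%N ->
  qbinom q m.+1 i = ((q ^ m.+1)%:R - 1) / ((q ^ (m.+1 - i))%:R - 1) * qbinom q m i.
Proof.
case: i => [|i] le_im.
  by rewrite !qbinom0 subn0 divff ?mulr1 // gt_eqF // expqS_sub1_gt0.
rewrite qbinomSS qbinomSr subSS.
have := expqS_sub1_gt0 i; have : 0 < (q ^ (m - i))%:R - 1 :> rat.
  by rewrite -(subnSK le_im) expqS_sub1_gt0.
move=> /gt_eqF ne0 /gt_eqF ne0'; field.
by rewrite ne0 ne0'.
Qed.

Lemma qbinom_sym m j : (j <= m)%N -> qbinom q m j = qbinom q m (m - j).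
Proof.
elim: m j => [|m IH] [|j] //= le_jm; rewrite ?subn0 ?qbinom_id ?qbinom0 //.
by rewrite subSS [RHS]qbinomSl ?leq_subr // -IH // qbinomSS subSn ?leq_subr // subKn.
Qed.

Lemma qbinom_pascal m j : (j <= m)%N ->
  qbinom q m.+1 j.+1 - qbinom q m j.+1 = (q ^ (m - j))%:R * qbinom q m j.
Proof.
move=> le_jm; rewrite qbinomSS qbinomSr.
have ne0 := gt_eqF (expqS_sub1_gt0 j).
have -> : (q ^ m.+1)%:R = (q ^ (m - j))%:R * (q ^ j.+1)%:R :> rat.
  by rewrite -natrM -expnD addnS subnK.
by field; rewrite ne0.
Qed.

Lemma qratio_le_theta c i :
  ((q ^ (c + i).+1)%:R - 1) / ((q ^ i.+1)%:R - 1) <= theta q c.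
Proof.
have qi1 := expqS_sub1_gt0 i; have q1 := expqS_sub1_gt0 0; rewrite expn1 in q1.
rewrite /theta ler_pdivrMr // mulrAC ler_pdivlMr //.
rewrite !expnSr expnD !natrM.
have a1 := expq_ge1 c; have b1 := expq_ge1 i.
set A := (q ^ c)%:R in a1 *; set B := (q ^ i)%:R in b1 *; set Q := (q%:R : rat).
have Q0 : 0 <= Q by rewrite ler0n.
have : 0 <= Q * ((A - 1) * (B - 1)) by apply: mulr_ge0 => //; apply: mulr_ge0; lra.
nra.
Qed.

Lemma qbinom_le_theta_exp c a g : (a <= c + g)%N -> qbinom q a g <= theta q c ^+ g.
Proof.
elim: g a => [|g IH] [|a] le_a; rewrite ?qbinom0 ?expr0 //.
  rewrite /qbinom big_ord_recl /= subn0 expn0 subrr !mul0r.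
  exact/exprn_ge0/theta_ge0.
rewrite qbinomSS exprS; apply: ler_pM.
- by apply: divr_ge0; rewrite subr_ge0 expq_ge1.
- exact: qbinom_ge0.
- apply: le_trans (qratio_le_theta c g); rewrite ler_pM2r ?invr_gt0 ?expqS_sub1_gt0 //.
  by rewrite lerB // ler_nat leq_exp2l // -addnS.
- by apply: IH; rewrite -ltnS -addnS.
Qed.

Lemma theta_qbinom_le c a b : (c.+1 + b <= a)%N ->
  theta q c * qbinom q a b <= qbinom q a.+1 b.+1.
Proof.
move=> le_cba; rewrite qbinomSS; apply: ler_wpM2r; first exact: qbinom_ge0.
have qb1 := expqS_sub1_gt0 b; have q1 := expqS_sub1_gt0 0; rewrite expn1 in q1.
rewrite /theta ler_pdivrMr // mulrAC ler_pdivlMr //.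
(* With X = q^(c+1) and Y = q^(b+1) <= q^(a+1) / X, and q >= 2:
   (q^(a+1) - 1)(q - 1) >= (XY - 1)(q - 1) >= (X - 1)(Y - 1). *)
have le_R : (q ^ c)%:R * q%:R * ((q ^ b)%:R * q%:R) <= (q ^ a.+1)%:R :> rat.
  by rewrite -!natrM -!expnSr -expnD ler_nat leq_exp2l // addnS.
rewrite (expnSr q c) (expnSr q b) !natrM.
have a1 := expq_ge1 c; have b1 := expq_ge1 b.
have Q2 : 2 <= q%:R :> rat by rewrite ler_nat.
set R := (q ^ a.+1)%:R in le_R *; set A := (q ^ c)%:R in a1 le_R *.
set B := (q ^ b)%:R in b1 le_R *; set Q := (q%:R : rat) in Q2 le_R *.
have X1 : 1 <= A * Q by nra.
have Y1 : 1 <= B * Q by nra.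
have h3 : 0 <= (R - A * Q * (B * Q)) * (Q - 1) by apply: mulr_ge0; lra.
have h4 : 0 <= (A * Q * (B * Q) - 1) * (Q - 2) by apply: mulr_ge0; nra.
set X := A * Q in X1 h3 h4 *; set Y := B * Q in Y1 h3 h4 *.
nra.
Qed.

Lemma theta_exp_qbinom_le c a b e : (c.+1 + b <= a)%N ->
  theta q c ^+ e * qbinom q a b <= qbinom q (a + e) (b + e).
Proof.
move=> le_cba; elim: e => [|e IH]; first by rewrite expr0 mul1r !addn0.
rewrite exprS -mulrA !addnS; apply: le_trans (@theta_qbinom_le c _ _ _); last first.
  by rewrite addnA leq_add2r.
by rewrite ler_wpM2l // theta_ge0.
Qed.

Lemma qbinomE z d : (d <= z)%N -> qbinom q z d =
  (\prod_(i < d) (q ^ z - q ^ i))%N%:R / (\prod_(i < d) (q ^ d - q ^ i))%N%:R.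
Proof.
have expq_subE (m i : nat) : (i <= m)%N ->
    (q ^ m - q ^ i)%N%:R = (q ^ i)%:R * ((q ^ (m - i))%:R - 1) :> rat.
  move=> le_im; rewrite natrB ?leq_exp2l //.
  by rewrite mulrBr mulr1 -natrM -expnD subnKC.
move=> le_dz; rewrite !natr_prod.
rewrite (eq_bigr (fun i : 'I_d => (q ^ i)%:R * ((q ^ (z - i))%:R - 1))); last first.
  by move=> i _; rewrite expq_subE // (leq_trans (ltnW (ltn_ord i))).
rewrite [X in _ / X](eq_bigr (fun i : 'I_d => (q ^ i)%:R * ((q ^ (d - i))%:R - 1)));
  last first.
  by move=> i _; rewrite expq_subE // ltnW.
rewrite !big_split /=.
have nz : \prod_(i < d) ((q ^ i)%:R : rat) != 0.
  rewrite prodf_seq_neq0; apply/allP => i _ /=.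
  by rewrite gt_eqF // (lt_le_trans ltr01) ?expq_ge1.
rewrite invfM mulrACA divff // mul1r /qbinom prodf_div; congr (_ / _).
rewrite (reindex_inj rev_ord_inj) /=; apply: eq_bigr => i _.
by rewrite subnSK.
Qed.
End GaussianBinomial.

Section Subspaces.
Variables (F : fieldType) (vT : vectType F).
Implicit Types (U W Z : {vspace vT}) (z : vT).

Lemma dimv_add_line W z : z \notin W -> \dim (W + <[z]>)%VS = (\dim W).+1.
Proof.
move=> zNW; have nz_z : z != 0 by apply: contraNneq zNW => ->; rewrite mem0v.
rewrite dimv_disjoint_sum ?dim_vline ?nz_z ?addn1 //.
apply/eqP; rewrite -subv0; apply/subvP => y /memv_capP[yW /vlineP[c yE]].
rewrite memv0 yE; have [-> | nz_c] := eqVneq c 0; first by rewrite scale0r.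
by move: yW; rewrite yE => /(memvZ c^-1); rewrite scalerA mulVf // scale1r (negbTE zNW).
Qed.

Lemma subspace_between W Z d : (W <= Z)%VS -> (\dim W <= d <= \dim Z)%N ->
  exists U, [/\ (W <= U)%VS, (U <= Z)%VS & \dim U = d].
Proof.
move=> sWZ /andP[]; have [r le_r] := ubnP (d - \dim W).
elim: r => // r IH in W sWZ le_r *; move=> le_Wd le_dZ.
have [eq_Wd | lt_Wd] := eqVneq (\dim W) d; first by exists W.
have lt_WZ : (\dim W < \dim Z)%N by rewrite (leq_trans _ le_dZ) // ltn_neqAle lt_Wd.
have /subvPn[z zZ zNW] : ~~ (Z <= W)%VS by apply: contraTN lt_WZ => /dimvS; rewrite leqNgt.
have [U [sWzU sUZ dU]] :
    exists U, [/\ (W + <[z]> <= U)%VS, (U <= Z)%VS & \dim U = d].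
  apply: IH; rewrite ?dimv_add_line //; last by rewrite ltn_neqAle lt_Wd.
    by rewrite subv_add sWZ -memvE.
  by move: le_r; rewrite subnS; lia.
by exists U; split => //; apply: subv_trans sWzU; apply: addvSl.
Qed.
End Subspaces.

(* For the subType structure of {vspace vT}, from which it inherits finiteness. *)
Import VectorInternalTheory.

HB.instance Definition _ (F : finFieldType) (vT : vectType F) :=
  [Finite of {vspace vT} by <:].

Section CountSubspaces.
Variables (F : finFieldType) (m : nat).
Local Notation vT := 'rV[F]_m.
Local Notation q := #|F|.
Implicit Types (U W Z : {vspace vT}).

Definition subspaces Z d := [set U : {vspace vT} | (U <= Z)%VS && (\dim U == d)].

Definition free_tuples Z d := [set s : d.-tuple vT | free s && all (mem Z) s].

Lemma card_vspaceD U Z : (U <= Z)%VS ->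
  #|[set v : vT | (v \in Z) && (v \notin U)]| = (q ^ \dim Z - q ^ \dim U)%N.
Proof.
move=> sUZ; have -> : [set v : vT | (v \in Z) && (v \notin U)] =
    [set v | v \in Z] :\: [set v | v \in U] by apply/setP => v; rewrite !inE andbC.
rewrite cardsD (_ : _ :&: _ = [set v | v \in U]) ?cardsE ?card_vspace //.
by apply/setP => v; rewrite !inE andb_idl // => /(subvP sUZ).
Qed.

Lemma card_free_tuples Z d : (d <= \dim Z)%N ->
  #|free_tuples Z d| = (\prod_(i < d) (q ^ \dim Z - q ^ i))%N.
Proof.
elim: d => [|d IH] le_dZ.
  rewrite big_ord0 (_ : free_tuples Z 0 = setT) ?cardsT ?card_tuple ?expn0 //.
  by apply/setP => s; rewrite !inE tuple0 nil_free.
rewrite big_ord_recr /= -IH ?(ltnW le_dZ) //.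
pose ext s := [set v : vT | (v \in Z) && (v \notin <<s>>%VS)].
pose P := [set p : d.-tuple vT * vT | (p.1 \in free_tuples Z d) && (p.2 \in ext p.1)].
have -> : free_tuples Z d.+1 = (fun p : d.-tuple vT * vT => [tuple of p.2 :: p.1]) @: P.
  apply/setP => u; apply/idP/imsetP.
    case/tupleP: u => v s; rewrite !inE /= free_cons.
    by case/andP=> /andP[vNs fs] /andP[vZ sZ]; exists (s, v); rewrite // !inE /= fs sZ vZ.
  case=> [[s v]]; rewrite !inE /= => /andP[/andP[fs sZ] /andP[vZ vNs]] ->.
  by rewrite /= free_cons vNs fs /= vZ sZ.
rewrite card_imset; last by move=> [s v] [s' v'] /= [-> /val_inj ->].
rewrite -sum1_card (eq_bigl (fun p => (p.1 \in free_tuples Z d) && (p.2 \in ext p.1)));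
  last by move=> p; rewrite inE.
rewrite -(pair_big_dep (mem (free_tuples Z d)) (fun s => mem (ext s)) (fun _ _ => 1%N)) /=.
rewrite -sum_nat_const; apply: eq_bigr => s; rewrite inE => /andP[fs /allP sZ].
rewrite sum1_card card_vspaceD; last exact/span_subvP.
by move: fs; rewrite /free size_tuple => /eqP ->.
Qed.

Lemma card_free_tuples_subspaces Z d :
  #|free_tuples Z d| = (#|subspaces Z d| * \prod_(i < d) (q ^ d - q ^ i))%N.
Proof.
rewrite -sum1_card (partition_big (fun s : d.-tuple vT => <<s>>%VS) (mem (subspaces Z d))) /=;
  last first.
  move=> s; rewrite !inE => /andP[fs /allP sZ].
  rewrite (_ : (<<s>> <= Z)%VS) /=; last exact/span_subvP.
  by move: fs; rewrite /free size_tuple.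
rewrite -sum_nat_const; apply: eq_bigr => U; rewrite inE => /andP[sUZ /eqP dU].
rewrite -[in RHS]dU -card_free_tuples ?dU // -sum1_card; apply: eq_bigl => s; rewrite !inE.
apply/andP/andP => [[/andP[fs _] /eqP <-] | [fs /allP sU]].
  by split=> //; apply/allP => v; apply: memv_span.
have sUs : (<<s>> <= U)%VS by apply/span_subvP.
have ds : \dim <<s>> = d by move: fs; rewrite /free size_tuple => /eqP.
split; first by rewrite fs; apply/allP => v /sU /(subvP sUZ).
by rewrite eqEdim sUs dU ds leqnn.
Qed.

Lemma card_subspaces Z d : (d <= \dim Z)%N ->
  #|subspaces Z d|%:R = qbinom q (\dim Z) d.
Proof.
have q_gt1 := card_finNzRing_gt1 F.
move=> le_dZ; rewrite qbinomE // -(card_free_tuples le_dZ) card_free_tuples_subspaces.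
rewrite natrM mulfK // pnatr_eq0 -lt0n; apply/prodn_gt0 => i.
by rewrite subn_gt0 ltn_exp2l.
Qed.

(* U |-> U :&: C, for a complement C of W in Z, is injective on the subspaces U
   between W and Z, and lowers their dimension by \dim W. *)
Lemma card_subspaces_over Z W d : (W <= Z)%VS -> (\dim W <= d)%N ->
  #|[set U in subspaces Z d | (W <= U)%VS]|%:R <= qbinom q (\dim Z - \dim W) (d - \dim W).
Proof.
move=> sWZ le_Wd; set C := (Z :\: W)%VS.
have capZW : (Z :&: W)%VS = W by apply/capv_idPr.
have dC : \dim C = (\dim Z - \dim W)%N by rewrite -(dimv_cap_compl Z W) capZW addKn.
have capCW : (C :&: W = 0)%VS by apply: capv_diff.
have addCW : (C + W)%VS = Z by have := addv_diff_cap Z W; rewrite capZW.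
have [le_dZ | lt_Zd] := leqP d (\dim Z); last first.
  rewrite (_ : [set U in _ | _] = set0) ?cards0 ?qbinom_ge0 ?card_finNzRing_gt1 //.
  apply/setP => U; rewrite !inE; apply/negP => /andP[/andP[/dimvS]].
  by move=> le_UZ /eqP dU; move: le_UZ; rewrite dU leqNgt lt_Zd.
have addUCW U : (W <= U <= Z)%VS -> (U :&: C + W)%VS = U.
  by case/andP=> sWU sUZ; rewrite vspace_modr // addCW; apply/capv_idPl.
rewrite -dC -card_subspaces ?dC ?leq_sub2r // ler_nat.
rewrite -(@card_in_imset _ _ (fun U => (U :&: C)%VS)); last first.
  move=> U1 U2; rewrite !inE => /andP[/andP[sU1Z _] sWU1] /andP[/andP[sU2Z _] sWU2] eqU.
  by rewrite -(addUCW U1) ?sWU1 // -(addUCW U2) ?sWU2 // eqU.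
apply: subset_leq_card; apply/subsetP => V /imsetP[U]; rewrite !inE.
case/andP=> /andP[sUZ /eqP dU] sWU ->; rewrite capvSr /=.
have := dimv_sum_cap (U :&: C) W; rewrite addUCW ?sWU //.
rewrite (_ : (U :&: C :&: W)%VS = 0%VS) ?dimv0 ?addn0 => [dUE|].
  by rewrite -dU dUE addnK.
by apply/eqP; rewrite -subv0 -capCW capvS ?capvSr.
Qed.
End CountSubspaces.
Section Homogenization.
Variables (F : finFieldType) (n : nat).
Local Notation V := 'rV[F]_(1 + n).
Implicit Types (a b : 'rV[F]_n) (A B : {set 'rV[F]_n}) (U Y : {vspace V}).

Definition homog a : V := row_mx 1%:M a.

Definition hdir : 'Hom('rV[F]_n, V) := linfun (mulmxr (row_mx 0 1%:M)).

Definition Hinf : {vspace V} := lker (linfun (@lsubmx F 1 1 n)).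

Definition cone A : {vspace V} := <<[seq homog a | a <- enum A]>>%VS.

Definition affine_part U : {set 'rV[F]_n} := [set a | homog a \in U].

Lemma hdirE a : hdir a = row_mx 0 a.
Proof. by rewrite lfunE /= mul_mx_row mulmx0 mulmx1. Qed.

Lemma memHinf u : (u \in Hinf) = (lsubmx u == 0).
Proof. by rewrite memv_ker lfunE. Qed.

Lemma homog_notin_Hinf a : homog a \notin Hinf.
Proof.
rewrite memHinf /homog row_mxKl; apply/eqP => /matrixP /(_ 0 0).
by rewrite !mxE /= => /eqP; rewrite oner_eq0.
Qed.

Lemma hdir_in_Hinf a : hdir a \in Hinf.
Proof. by rewrite memHinf hdirE row_mxKl. Qed.

Lemma Hinf_hdir u : u \in Hinf -> u = hdir (rsubmx u).
Proof. by rewrite memHinf hdirE => /eqP <-; rewrite hsubmxK. Qed.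

Lemma homogB a b : homog a - homog b = hdir (a - b).
Proof. by rewrite hdirE /homog opp_row_mx add_row_mx subrr. Qed.

Lemma dim_hdir_img (W : {vspace 'rV[F]_n}) : \dim (hdir @: W)%VS = \dim W.
Proof.
apply: limg_dim_eq; apply/eqP; rewrite -subv0; apply/subvP => y /memv_capP[_].
by rewrite memv_ker hdirE memv0 -row_mx0 => /eqP /eq_row_mx[_ ->].
Qed.

Lemma mem_cone A a : a \in A -> homog a \in cone A.
Proof. by move=> aA; apply/memv_span/map_f; rewrite mem_enum. Qed.

Lemma cone_subvP A Y : reflect {in A, forall a, homog a \in Y} (cone A <= Y)%VS.
Proof.
apply: (iffP span_subvP) => [sAY a aA | sAY y /mapP[a]].
  by apply: sAY; rewrite map_f ?mem_enum.
by rewrite mem_enum => aA ->; apply: sAY.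
Qed.

Lemma affine_partS U Y : (U <= Y)%VS -> affine_part U \subset affine_part Y.
Proof. by move=> sUY; apply/subsetP => a; rewrite !inE => /(subvP sUY). Qed.

Lemma dimv_capHinf U : ~~ (U <= Hinf)%VS -> \dim (U :&: Hinf)%VS = (\dim U).-1.
Proof.
case/subvPn => u uU uNH; set L := linfun (@lsubmx F 1 1 n).
have dLU : \dim (L @: U)%VS = 1%N.
  apply/eqP; rewrite eqn_leq (leq_trans (dimvS (subvf _))) ?dimvf //=.
  have : L u \in (L @: U)%VS by rewrite memv_img.
  rewrite memvE => /dimvS; apply: leq_trans.
  by rewrite dim_vline lfunE lt0b -memHinf.
by have := limg_ker_dim L U; rewrite dLU addn1 => <-.
Qed.

Lemma affine_part_affine d U : ~~ (U <= Hinf)%VS -> \dim U = d.+1 ->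
  affine_space d (affine_part U).
Proof.
move=> UNH dU; have [u uU uNH] := subvPn UNH.
set c := lsubmx u 0 0.
have nz_c : c != 0.
  apply: contra uNH => /eqP c0; rewrite memHinf; apply/eqP/matrixP => i j.
  by rewrite !ord1 -/c c0 mxE.
set v := rsubmx (c^-1 *: u).
have homog_v : homog v = c^-1 *: u.
  rewrite /homog -[RHS]hsubmxK; congr row_mx.
  by apply/matrixP => i j; rewrite !ord1 linearZ /= [RHS]mxE -/c mulVf // mxE.
have vU : homog v \in U by rewrite homog_v memvZ.
exists v, (linfun (@rsubmx F 1 1 n) @: (U :&: Hinf))%VS; split.
  rewrite limg_dim_eq; first by rewrite dimv_capHinf // dU.
  apply/eqP; rewrite -subv0; apply/subvP => y /memv_capP[/memv_capP[_ yH]].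
  by rewrite memv_ker lfunE memv0 /= => /eqP r0; rewrite (Hinf_hdir yH) r0 linear0.
apply/setP => a; rewrite !inE -(subrK (homog v) (homog a)) homogB (rpredDr _ vU).
apply/idP/memv_imgP => [aU | [y /memv_capP[yU yH] ->]].
  by exists (hdir (a - v)); rewrite ?memv_cap ?aU ?hdir_in_Hinf // lfunE hdirE /= row_mxKr.
by rewrite [linfun _ y]lfunE -Hinf_hdir.
Qed.

Lemma cone_coset v (W : {vspace 'rV[F]_n}) :
  cone [set a | a - v \in W] = (hdir @: W + <[homog v]>)%VS.
Proof.
apply/eqP; rewrite eqEsubv; apply/andP; split.
  apply/cone_subvP => a; rewrite inE => aW.
  rewrite -(subrK (homog v) (homog a)) homogB memv_add ?memv_line ?memv_img //.
rewrite subv_add -memvE mem_cone ?inE ?subrr ?mem0v // andbT.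
apply/subvP => _ /memv_imgP[w wW ->].
rewrite -(addrK v w) -homogB memvB ?mem_cone // inE ?subrr ?mem0v //.
by rewrite addrK.
Qed.

Lemma cone_affine k A : affine_space k A ->
  \dim (cone A) = k.+1 /\ affine_part (cone A) = A.
Proof.
case=> v [W [dW ->]]; rewrite cone_coset.
have sWH : (hdir @: W <= Hinf)%VS.
  by apply/subvP => _ /memv_imgP[w _ ->]; apply: hdir_in_Hinf.
split.
  rewrite dimv_add_line ?dim_hdir_img ?dW //.
  by apply: contra (homog_notin_Hinf v) => /(subvP sWH).
apply/setP => a; rewrite !inE; apply/idP/idP => [|aW]; last first.
  by rewrite -(subrK (homog v) (homog a)) homogB memv_add ?memv_line ?memv_img.
case/memv_addP=> _ /memv_imgP[w wW ->] [_ /vlineP[c ->] eq_a].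
have := congr1 lsubmx eq_a; have := congr1 rsubmx eq_a.
rewrite hdirE /homog !linearD !linearZ /= !row_mxKl !row_mxKr.
move=> -> /matrixP /(_ 0 0); rewrite !mxE /= add0r mulr1 => <-.
by rewrite scale1r addrK.
Qed.

Lemma affine_space_neq0 k A : affine_space k A -> exists a, a \in A.
Proof. by case=> v [W [_ ->]]; exists v; rewrite inE subrr mem0v. Qed.

Lemma cone_notin_Hinf k A : affine_space k A -> ~~ (cone A <= Hinf)%VS.
Proof.
move=> /affine_space_neq0[a aA]; apply/subvPn.
by exists (homog a); [apply: mem_cone | apply: homog_notin_Hinf].
Qed.

Lemma meets_cone t A B : meets_in t A B -> exists C : {vspace V},
  [/\ (C <= cone A)%VS, (C <= cone B)%VS, \dim C = t.+1 & ~~ (C <= Hinf)%VS].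
Proof.
case=> C [affC [sCA sCB]]; exists (cone C); split.
- by apply/cone_subvP => a /(subsetP sCA); apply: mem_cone.
- by apply/cone_subvP => a /(subsetP sCB); apply: mem_cone.
- by case: (cone_affine affC).
- exact: cone_notin_Hinf affC.
Qed.

Lemma meets_affine_part t k A U Y : affine_space k A ->
  (Y <= U)%VS -> (Y <= cone A)%VS -> (t < \dim Y)%N -> ~~ (Y <= Hinf)%VS ->
  meets_in t (affine_part U) A.
Proof.
move=> affA sYU sYA lt_tY YNH; have [y yY yNH] := subvPn YNH.
have nz_y : y != 0 by apply: contraNneq yNH => ->; rewrite mem0v.
have [C [syC sCY dC]] : exists C, [/\ (<[y]> <= C)%VS, (C <= Y)%VS & \dim C = t.+1].
  by apply: subspace_between; rewrite -?memvE // dim_vline nz_y.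
have CNH : ~~ (C <= Hinf)%VS by apply/subvPn; exists y; rewrite -?memvE.
exists (affine_part C); split; first exact: affine_part_affine.
split; first by apply/affine_partS/(subv_trans sCY).
by case: (cone_affine affA) => _ <-; apply/affine_partS/(subv_trans sCY).
Qed.

Lemma card_subspaces_notin_Hinf U e d : ~~ (U <= Hinf)%VS -> \dim U = e.+1 -> (d < e)%N ->
  #|[set C in subspaces U d.+1 | ~~ (C <= Hinf)%VS]|%:R =
    (#|F| ^ (e - d))%:R * qbinom #|F| e d.
Proof.
move=> UNH dU lt_de.
have -> : [set C in subspaces U d.+1 | ~~ (C <= Hinf)%VS] =
    subspaces U d.+1 :\: subspaces (U :&: Hinf)%VS d.+1.
  apply/setP => C; rewrite !inE subv_cap.
  by case: (_ <= U)%VS; case: (_ <= Hinf)%VS; case: (_ == _).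
have sub : subspaces (U :&: Hinf)%VS d.+1 \subset subspaces U d.+1.
  by apply/subsetP => C; rewrite !inE subv_cap => /andP[/andP[-> _] ->].
rewrite cardsD (setIidPr sub) natrB ?subset_leq_card //.
rewrite !card_subspaces ?dimv_capHinf ?dU ?ltnS ?(ltnW lt_de) //.
exact/qbinom_pascal/ltnW/lt_de/card_finNzRing_gt1.
Qed.
End Homogenization.
Arguments Hinf {F n}.

Lemma card_bigcup_le (I T : finType) (P : pred I) (f : I -> {set T}) :
  (#|\bigcup_(i | P i) f i| <= \sum_(i | P i) #|f i|)%N.
Proof.
apply: (big_ind2 (fun (X : {set T}) m => #|X| <= m)%N) => //; first by rewrite cards0.
by move=> X1 m1 X2 m2 le1 le2; rewrite (leq_trans (leq_card_setU X1 X2).1) ?leq_add.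
Qed.

Section ThroughBound.
Variables (F : finFieldType) (n k t x : nat) (S : {set {set 'rV[F]_n}}).
Hypotheses (lt_n : (2 * k - t < n)%N) (S_tint : t_intersecting k t S)
  (psi_gt : forall (d : nat) (T : {set 'rV[F]_n}), (d < t + x)%N ->
      affine_space d T -> ~ covers t T S).
Local Notation q := #|F|.
Local Notation V := 'rV[F]_(1 + n).
Implicit Types (A B : {set 'rV[F]_n}) (U C : {vspace V}).

Definition through U := [set A in S | (U <= cone A)%VS].

(* The two nonzero branches agree at s = t + x. *)
Definition through_bound s : rat :=
  if (k < s)%N then 0 else
  if (s <= t + x)%N then theta q (k - t) ^+ (t + x - s) * qbinom q (n - t - x) (k - t - x)
  else qbinom q (n - s) (k - s).

Definition extensions A U :=
  [set C in subspaces (cone A) (maxn t (\dim (U :&: cone A))).+1 | (U :&: cone A <= C)%VS].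

Let q_gt1 : (1 < q)%N := card_finNzRing_gt1 F.

Lemma S_affine A : A \in S -> affine_space k A.
Proof. by case: S_tint => affS _; apply: affS. Qed.

Lemma through_bound_ge0 s : 0 <= through_bound s.
Proof.
rewrite /through_bound; case: ifP => // _; case: ifP => _; last exact: qbinom_ge0.
by rewrite mulr_ge0 ?exprn_ge0 ?theta_ge0 ?qbinom_ge0.
Qed.

Lemma card_through_le_qbinom U s : \dim U = s.+1 ->
  #|through U|%:R <= if (k < s)%N then 0 else qbinom q (n - s) (k - s).
Proof.
move=> dU; have cone_dim A : A \in S -> \dim (cone A) = k.+1.
  by move/S_affine/cone_affine => [].
case: ifP => [lt_ks | le_sk].
  rewrite (_ : through U = set0) ?cards0 //; apply/setP => A; rewrite !inE.
  apply/negP => /andP[AS /dimvS]; rewrite cone_dim // dU ltnS leqNgt.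
  by rewrite lt_ks.
have := card_subspaces_over (subvf U) (_ : \dim U <= k.+1)%N.
rewrite dU ltnS leqNgt le_sk dimvf /dim /= mul1n subSS => /(_ isT).
rewrite (_ : (1 + n - s.+1 = n - s)%N); last by rewrite add1n subSS.
apply: le_trans; rewrite ler_nat -(@card_in_imset _ _ (@cone F n)); last first.
  move=> A B; rewrite !inE => /andP[AS _] /andP[BS _] eqAB.
  by case: (cone_affine (S_affine AS)) => _ <-; rewrite eqAB; case: (cone_affine (S_affine BS)).
apply/subset_leq_card/subsetP => C /imsetP[A]; rewrite !inE => /andP[AS sUA] ->.
by rewrite subvf sUA (cone_dim _ AS) eqxx.
Qed.

Lemma through_bound_step s g : (s < t + x)%N -> (s <= k)%N ->
  theta q (k - t) ^+ g * through_bound (s + g) <= through_bound s.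
Proof.
move=> lt_s le_sk; have theta_ge0 := theta_ge0 q_gt1 (k - t).
rewrite {2}/through_bound ltnNge le_sk (ltnW lt_s) /= /through_bound.
case: ltnP => [_ | le_sgk]; first by rewrite mulr0 mulr_ge0 ?exprn_ge0 ?qbinom_ge0.
case: leqP => [le_sg | lt_sg].
  by rewrite mulrA -exprD (_ : (g + (t + x - (s + g)) = t + x - s)%N) //; lia.
rewrite {1}(_ : g = (t + x - s + (s + g - (t + x)))%N); last by lia.
rewrite exprD -mulrA ler_wpM2l ?exprn_ge0 //.
have := theta_exp_qbinom_le q_gt1 (s + g - (t + x))
  (_ : (k - t).+1 + (k - (s + g)) <= n - (s + g))%N.
rewrite (_ : (n - (s + g) + _ = n - t - x)%N); last by lia.
by rewrite (_ : (k - (s + g) + _ = k - t - x)%N); [apply; lia | lia].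
Qed.

Lemma card_extensions_le A U : A \in S ->
  #|extensions A U|%:R <= theta q (k - t) ^+
    ((maxn t (\dim (U :&: cone A))).+1 - \dim (U :&: cone A)).
Proof.
move=> AS; set w := \dim _.
apply: le_trans (card_subspaces_over (capvSr U (cone A)) (_ : w <= _)%N) _.
  by rewrite ltnW // ltnS leq_maxr.
case: (cone_affine (S_affine AS)) => -> _.
by apply: qbinom_le_theta_exp => //; lia.
Qed.

Lemma dim_add_extension A U C : C \in extensions A U ->
  \dim (U + C)%VS = (\dim U + ((maxn t (\dim (U :&: cone A))).+1 - \dim (U :&: cone A)))%N.
Proof.
rewrite !inE => /andP[/andP[sCA /eqP dC] sWC].
have capUC : (U :&: C)%VS = (U :&: cone A)%VS.
  by apply/eqP; rewrite eqEsubv (capvS (subvv U) sCA) subv_cap capvSl.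
have := dimv_sum_cap U C; rewrite capUC dC; lia.
Qed.

Lemma through_subset_bigcup A U : A \in S -> ~ meets_in t (affine_part U) A ->
  ~~ (U <= Hinf)%VS -> (t < \dim U)%N ->
  through U \subset \bigcup_(C in extensions A U) through (U + C)%VS.
Proof.
move=> AS UNA UNH lt_tU; set W := (U :&: cone A)%VS; set d := (maxn t (\dim W)).+1.
have affA := S_affine AS.
have WH : (t < \dim W)%N -> (W <= Hinf)%VS.
  move=> lt_tW; apply: contraNT UNH => WNH; case: UNA.
  exact: meets_affine_part affA (capvSl _ _) (capvSr _ _) lt_tW WNH.
apply/subsetP => B; rewrite inE => /andP[BS sUB].
have neqAB : A != B.
  apply: contra_not_neq UNA => eqAB.
  by apply: meets_affine_part affA (subvv U) _ lt_tU UNH; rewrite eqAB.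
have [C0 [sC0A sC0B dC0 C0NH]] := meets_cone (S_tint.2 _ _ AS BS neqAB).
have sWZ : (W <= W + C0)%VS by apply: addvSl.
have le_dZ : (d <= \dim (W + C0))%N.
  have [le_wt | lt_tw] := leqP (\dim W) t.
    by rewrite /d (maxn_idPl le_wt) -dC0 dimvS // addvSr.
  have [c cC0 cNH] := subvPn C0NH.
  have cNW : c \notin W by apply: contra cNH => /(subvP (WH lt_tw)).
  rewrite /d (maxn_idPr (ltnW lt_tw)) -(dimv_add_line cNW) dimvS //.
  by rewrite subv_add sWZ -memvE (subvP (addvSr W C0)).
have [C [sWC sCZ dC]] : exists C, [/\ (W <= C)%VS, (C <= W + C0)%VS & \dim C = d].
  by apply: subspace_between; rewrite // le_dZ andbT ltnW // ltnS leq_maxr.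
apply/bigcupP; exists C.
  by rewrite !inE sWC dC eqxx (subv_trans sCZ) // subv_add capvSr.
by rewrite inE BS subv_add sUB (subv_trans sCZ) // subv_add sC0B (subv_trans (capvSl _ _)).
Qed.

Lemma card_through_le U s : (t <= s)%N -> \dim U = s.+1 -> ~~ (U <= Hinf)%VS ->
  #|through U|%:R <= through_bound s.
Proof.
have [m] := ubnP (t + x - s); elim: m => // m IH in U s *; move=> lt_m le_ts dU UNH.
have base : (t + x <= s)%N || (k < s)%N -> #|through U|%:R <= through_bound s.
  move=> big; apply: le_trans (card_through_le_qbinom dU) _.
  rewrite /through_bound; case: ltnP => // le_sk; case: leqP => // le_s.
  have -> : s = (t + x)%N by move: big; rewrite ltnNge le_sk orbF; lia.
  by rewrite subnn expr0 mul1r !subnDA.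
have [le_txs | lt_s] := leqP (t + x) s; first by rewrite base ?le_txs.
have [lt_ks | le_sk] := ltnP k s; first by rewrite base ?lt_ks ?orbT.
have [A AS UNA] : exists2 A, A \in S & ~ meets_in t (affine_part U) A.
  apply: NNPP => noA; apply: (psi_gt lt_s (affine_part_affine UNH dU)) => A AS.
  by apply: NNPP => UNA; apply: noA; exists A.
set w := \dim (U :&: cone A); set g := ((maxn t w).+1 - w)%N.
apply: le_trans (through_bound_step g lt_s le_sk).
apply: le_trans (_ : \sum_(C in extensions A U) (#|through (U + C)%VS|%:R : rat) <= _).
  rewrite -natr_sum ler_nat (leq_trans _ (card_bigcup_le _ _)) //.
  by rewrite subset_leq_card // through_subset_bigcup // dU.
apply: le_trans (_ : \sum_(C in extensions A U) through_bound (s + g) <= _).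
  have g_gt0 : (0 < g)%N by rewrite subn_gt0 ltnS leq_maxr.
  apply: ler_sum => C CA; apply: IH.
  - by lia.
  - exact: leq_trans le_ts (leq_addr _ _).
  - by rewrite (dim_add_extension CA) dU addSn.
  - by apply: contra UNH; apply/subv_trans/addvSl.
rewrite sumr_const -mulr_natl ler_wpM2r ?through_bound_ge0 //.
exact: card_extensions_le.
Qed.
End ThroughBound.

Theorem mainTheorem13 (F : finFieldType) (n k t x : nat)
  (S : {set {set 'rV[F]_n}}) :
  (t.+1 < k)%N -> (2 * k - t < n)%N ->
  maximal_t_intersecting k t S ->
  (* psi(S) = t + x : some affine (t+x)-space works, no smaller one does *)
  (exists T : {set 'rV[F]_n}, affine_space (t + x) T /\ covers t T S) ->
  (forall (d : nat) (T : {set 'rV[F]_n}), (d < t + x)%N ->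
      affine_space d T -> ~ covers t T S) ->
  (2 <= x)%N ->
  (#|S|%:R : rat) <=
    (#|F| ^ x)%:R * qbinom #|F| (t + x) x * theta #|F| (k - t) ^+ x
      * qbinom #|F| (n - t - x) (k - t - x).
Proof.
move=> lt_t1_k lt_n [S_tint _] [T [affT covT]] psi_gt le2x.
have [dT _] := cone_affine affT.
set Ts := [set C in subspaces (cone T) t.+1 | ~~ (C <= Hinf)%VS].
have sub_S : S \subset \bigcup_(C in Ts) through S C.
  apply/subsetP => A AS; have [C [sCT sCA dC CNH]] := meets_cone (covT A AS).
  by apply/bigcupP; exists C; rewrite !inE ?sCT ?dC ?eqxx ?CNH ?AS ?sCA.
apply: le_trans (_ : \sum_(C in Ts) (#|through S C|%:R : rat) <= _).
  by rewrite -natr_sum ler_nat (leq_trans (subset_leq_card sub_S)) ?card_bigcup_le.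
apply: le_trans (_ : \sum_(C in Ts) through_bound F n k t x t <= _).
  apply: ler_sum => C; rewrite !inE => /andP[/andP[_ /eqP dC] CNH].
  exact: card_through_le.
rewrite sumr_const /Ts -[_ *+ _]mulr_natl.
rewrite (card_subspaces_notin_Hinf (cone_notin_Hinf affT) dT); last by lia.
rewrite addKn [qbinom _ (t + x) x]qbinom_sym ?leq_addl ?card_finNzRing_gt1 // addnK.
rewrite /through_bound ltnNge (ltnW (ltnW lt_t1_k)) leq_addr addKn /=.
by rewrite !mulrA.
Qed.
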